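(* Let $\mathcal{A}$ be a unital $C^*$-algebra with unit $1_{\mathcal{A}}$ and let $S$ be the unilateral shift on $H_{\mathcal{A}}$ ($Se_k=e_{k+1}$, $k\in\mathbb{N}$). Then $1_{\mathcal{A}}\in\sigma^{\mathcal{A}}(S)$.
   Context: $H_{\mathcal{A}}=l_2(\mathcal{A})$ is the standard Hilbert $C^*$-module of sequences $(x_1,x_2,\dots)$ in $\mathcal{A}$ with $\sum_k x_k^*x_k$ norm-convergent, inner product $\langle x,y\rangle=\sum_k x_k^*y_k$; $\{e_k\}$ is its standard orthonormal basis. $B^a(H_{\mathcal{A}})$ denotes the bounded adjointable $\mathcal{A}$-linear operators on $H_{\mathcal{A}}$. For $\alpha\in\mathcal{A}$, $\alpha I$ is the operator $(x_k)\mapsto(\alpha x_k)$. For $F\in B^a(H_{\mathcal{A}})$, $\sigma^{\mathcal{A}}(F)=\{\alpha\in\mathcal{A}\mid F-\alpha I$ is not invertible in $B^a(H_{\mathcal{A}})\}$. *)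

From mathcomp Require Import all_boot all_order all_algebra.
From mathcomp Require Import all_reals.
From mathcomp Require Import complex.
Set Implicit Arguments. Unset Strict Implicit. Unset Printing Implicit Defensive.
Import Order.TTheory GRing.Theory Num.Theory.
Local Open Scope ring_scope.

Section CStar.
Variable R : realType.
Local Notation C := (R[i]).

Record is_unital_cstar (A : algType C) (star : A -> A) (nrm : A -> R) : Prop := {
  nrm_ge0   : forall a, 0 <= nrm a;
  nrm_eq0   : forall a, nrm a = 0 -> a = 0;
  nrm_triangle : forall a b, nrm (a + b) <= nrm a + nrm b;
  nrm_scale : forall (c : C) a, nrm (c *: a) = complex.Re `|c| * nrm a;
  nrm_submult : forall a b, nrm (a * b) <= nrm a * nrm b;
  star_add  : forall a b, star (a + b) = star a + star b;
  star_scale : forall (c : C) a, star (c *: a) = c^* *: star a;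
  star_mul  : forall a b, star (a * b) = star b * star a;
  star_invol : forall a, star (star a) = a;
  cstar_identity : forall a, nrm (star a * a) = nrm a ^+ 2;
  nrm_complete : forall u : nat -> A,
     (forall e : R, 0 < e -> exists N, forall m n, (N <= m)%N -> (N <= n)%N ->
        nrm (u m - u n) < e) ->
     exists l, forall e : R, 0 < e -> exists N, forall n, (N <= n)%N -> nrm (u n - l) < e
}.

Variables (A : algType C) (star : A -> A) (nrm : A -> R).

Definition cvg_to (u : nat -> A) (l : A) : Prop :=
  forall e : R, 0 < e -> exists N, forall n, (N <= n)%N -> nrm (u n - l) < e.

Definition inner_is (x y : nat -> A) (v : A) : Prop :=
  cvg_to (fun n => \sum_(k < n) star (x k) * y k) v.

(* x belongs to H_A = l_2(A) *)
Definition in_HA (x : nat -> A) : Prop := exists v, inner_is x x v.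

Definition seq_add (x y : nat -> A) : nat -> A := fun k => x k + y k.
Definition seq_rmul (x : nat -> A) (a : A) : nat -> A := fun k => x k * a.

(* F is a bounded adjointable A-linear operator on H_A *)
Definition is_Ba (F : (nat -> A) -> (nat -> A)) : Prop :=
  (forall x, in_HA x -> in_HA (F x)) /\
  (forall x y a b, in_HA x -> in_HA y ->
      F (seq_add (seq_rmul x a) (seq_rmul y b)) = seq_add (seq_rmul (F x) a) (seq_rmul (F y) b)) /\
  (exists M : R, 0 <= M /\ forall x v w, in_HA x ->
      inner_is (F x) (F x) v -> inner_is x x w -> nrm v <= M ^+ 2 * nrm w) /\
  (exists G : (nat -> A) -> (nat -> A),
      (forall y, in_HA y -> in_HA (G y)) /\
      forall x y v, in_HA x -> in_HA y -> inner_is (F x) y v -> inner_is x (G y) v).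

Definition invertible_Ba (F : (nat -> A) -> (nat -> A)) : Prop :=
  is_Ba F /\ exists G, is_Ba G /\
    (forall x, in_HA x -> G (F x) = x) /\ (forall x, in_HA x -> F (G x) = x).

Definition scalI (alpha : A) (x : nat -> A) : nat -> A := fun k => alpha * x k.

Definition op_sub (F G : (nat -> A) -> (nat -> A)) x : nat -> A :=
  fun k => F x k - G x k.

Definition A_spectrum (F : (nat -> A) -> (nat -> A)) : A -> Prop :=
  fun alpha => ~ invertible_Ba (op_sub F (scalI alpha)).

(* unilateral shift: S e_k = e_{k+1}, i.e. (S x)_0 = 0, (S x)_{k+1} = x_k *)
Definition shift (x : nat -> A) : nat -> A :=
  fun k => if k is k'.+1 then x k' else 0.

End CStar.

(* If S - 1 had an inverse G in B^a(H_A), then y := G e_0 would solve y_{k-1} - y_k = (e_0)_k,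
   forcing y_k = -1 for every k. The partial sums of <y, y> are then n (1^* 1), whose norm
   n ||1||^2 is unbounded, so y is not in H_A. *)
From mathcomp Require Import all_boot all_order all_algebra.
From mathcomp Require Import all_reals.
From mathcomp Require Import complex.
Set Implicit Arguments. Unset Strict Implicit. Unset Printing Implicit Defensive.
Local Open Scope ring_scope.
Import GRing.Theory Num.Theory Order.TTheory.

Section ShiftSpectrum.
Variables (R : realType) (A : algType (R[i])) (star : A -> A) (nrm : A -> R).
Hypothesis cstarA : is_unital_cstar star nrm.

Lemma nrm0 : nrm 0 = 0.
Proof. by rewrite -(scale0r (0 : A)) (nrm_scale cstarA) normr0 mul0r. Qed.

Lemma nrmN (a : A) : nrm (- a) = nrm a.
Proof. by rewrite -scaleN1r (nrm_scale cstarA) normrN normr1 mul1r. Qed.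

Lemma nrm_gt0 (a : A) : a != 0 -> 0 < nrm a.
Proof.
move=> a_neq0; rewrite lt_neqAle (nrm_ge0 cstarA) andbT eq_sym.
by apply: contra a_neq0 => /eqP/(nrm_eq0 cstarA)->.
Qed.

Lemma star0 : star 0 = 0.
Proof. by apply/(addrI (star 0)); rewrite -(star_add cstarA) !addr0. Qed.

Lemma cvg_to_mulrn_nrm_eq0 (c l : A) :
  cvg_to nrm (fun n => c *+ n) l -> nrm c = 0.
Proof.
move=> cvg_cn; apply/eqP; rewrite eq_le (nrm_ge0 cstarA) andbT leNgt.
apply/negP => c_gt0.
have [N cnN] := cvg_cn (nrm c / 2) (divr_gt0 c_gt0 (ltr0Sn _ 1)).
have c_split : c = (c *+ N.+1 - l) + - (c *+ N - l).
  by rewrite mulrS opprB addrA subrK addrK.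
have := nrm_triangle cstarA (c *+ N.+1 - l) (- (c *+ N - l)).
rewrite -c_split nrmN => /le_lt_trans/(_ (ltrD (cnN _ (leqnSn N)) (cnN _ (leqnn N)))).
by rewrite -splitr ltxx.
Qed.

Lemma const_notin_HA (x : nat -> A) (a : A) :
  a != 0 -> (forall k, x k = a) -> ~ in_HA star nrm x.
Proof.
move=> a_neq0 x_const [v xx_v].
have partial_sums n : \sum_(k < n) star (x k) * x k = (star a * a) *+ n.
  by under eq_bigr => k _ do rewrite x_const; rewrite sumr_const card_ord.
have /cvg_to_mulrn_nrm_eq0 : cvg_to nrm (fun n => (star a * a) *+ n) v.
  by move=> e e_gt0; have [N xxN] := xx_v e e_gt0; exists N => n; rewrite -partial_sums; apply: xxN.
apply/eqP; rewrite (cstar_identity cstarA) expf_neq0 //.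
by rewrite gt_eqF // nrm_gt0.
Qed.

Definition basis0 : nat -> A := fun k => if k is 0 then 1 else 0.

Lemma basis0_in_HA : in_HA star nrm basis0.
Proof.
exists (star 1 * 1) => e e_gt0; exists 1%N => -[//|n] _.
rewrite big_ord_recl big1 ?addr0 ?subrr ?nrm0 // => i _.
by rewrite /= star0 mul0r.
Qed.

Lemma shift_sub1_basis0_const (y : nat -> A) :
  op_sub (shift (A:=A)) (scalI 1) y = basis0 -> forall k, y k = -1.
Proof.
move=> y_sol; have yk k := congr1 (fun f => f k) y_sol.
elim=> [|k IH].
  by have /eqP := yk 0%N; rewrite /op_sub /scalI /= mul1r sub0r eqr_oppLR => /eqP.
by have /eqP := yk k.+1; rewrite /op_sub /scalI /= mul1r IH subr_eq0 => /eqP.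
Qed.

End ShiftSpectrum.

Theorem corollary2p5 (R : realType) (A : algType (R[i])) (star : A -> A) (nrm : A -> R) :
  is_unital_cstar star nrm ->
  A_spectrum star nrm (shift (A:=A)) 1.
Proof.
move=> cstarA [_ [G [[G_HA _] [_ G_rinv]]]].
have y_const := shift_sub1_basis0_const (G_rinv _ (basis0_in_HA cstarA)).
apply: (const_notin_HA cstarA _ y_const (G_HA _ (basis0_in_HA cstarA))).
by rewrite oppr_eq0 oner_eq0.
Qed.
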